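(* There is a deterministic max-finding algorithm that, given $n$ elements, uses $O(n)$ comparisons and outputs an element $x$ with $x \ge x^* - \log_2\log_2 n$, where $x^*$ is the maximum value of an input element (i.e., it has error at most $\log_2\log_2 n$).
   Context: Model of imprecise comparisons: there are $n$ elements, each with a fixed unknown real value; we identify an element with its value. Asked to compare $x_i$ and $x_j$, the comparator answers either ''$x_i \ge x_j$'' or ''$x_j \ge x_i$''. If $|x_i-x_j|>1$ the answer is correct; if $|x_i-x_j|\le 1$ the answer is arbitrary (possibly adversarial and adaptive). The guarantee and comparison bound hold for every input and every comparator behaviour consistent with these rules. *)

From mathcomp Require Import ssreflect ssrfun ssrbool eqtype ssrnat fintype.
From Stdlib Require Import Reals.
Set Implicit Arguments.
Unset Strict Implicit.
Unset Printing Implicit Defensive.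
Open Scope R_scope.

Definition log2 (y : R) : R := ln y / ln 2.

(* A deterministic comparison-based algorithm on n elements (indexed by 'I_n)
   is a decision tree.  [Cmp i j tge tle] asks the comparator about x_i, x_j:
   on answer "x_i >= x_j" it continues with [tge], on answer "x_j >= x_i"
   with [tle].  [Leaf k] outputs element k. *)
Inductive ctree (n : nat) : Type :=
| Leaf : 'I_n -> ctree n
| Cmp : 'I_n -> 'I_n -> ctree n -> ctree n -> ctree n.

(* The answer "x_i >= x_j" is admissible for the imprecise comparator iff it is
   correct or |x_i - x_j| <= 1 (then the answer is arbitrary). *)
Definition admissible_ge (x_i x_j : R) : Prop := Rabs (x_i - x_j) <= 1 \/ x_j <= x_i.

(* [run x t k c]: for input values x, some comparator behaviour consistent with
   the model (possibly adversarial and adaptive) drives the tree t to output k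
   after exactly c comparisons. *)
Inductive run (n : nat) (x : 'I_n -> R) : ctree n -> 'I_n -> nat -> Prop :=
| run_leaf k : run x (Leaf k) k 0
| run_ge i j tge tle k c :
    admissible_ge (x i) (x j) -> run x tge k c -> run x (Cmp i j tge tle) k c.+1
| run_le i j tge tle k c :
    admissible_ge (x j) (x i) -> run x tle k c -> run x (Cmp i j tge tle) k c.+1.

(* Stage [t] cuts the surviving candidates into groups of size [2 ^ h_t], with
   [h_t] about [16 * 2 ^ t], plays a round robin inside each group and keeps a
   dominating set of the resulting tournament, built greedily from the players
   with most wins; since each chosen player beats at least half of the players
   not yet dominated, it has at most [h_t + 1] elements. All answers are correct
   up to 1 and every discarded candidate loses to a kept one, so a stage costs at
   most 1 in value, and the king of a final round robin (who beats every player
   directly or through one intermediate) costs at most 2. Stage [t] makes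
   [2 ^ h_t] comparisons per candidate and divides the number of candidates by
   about [2 ^ (h_t - t - 6)]; these exponents grow so fast that stage [t] costs
   O(n / 2 ^ t), and after about [log2 log2 n - 4] stages only O(sqrt n)
   candidates remain, whose round robin costs O(n). *)

From Stdlib Require Import Reals Lra.
From mathcomp Require Import ssreflect ssrfun ssrbool eqtype ssrnat seq fintype prime.
From mathcomp Require Import zify.
Set Implicit Arguments. Unset Strict Implicit. Unset Printing Implicit Defensive.
Local Open Scope nat_scope.

Lemma sumn_map_add (T : Type) (f g : T -> nat) s :
  sumn (map (fun u => f u + g u) s) = sumn (map f s) + sumn (map g s).
Proof. by elim: s => //= a s ->; rewrite addnACA. Qed.

Lemma sub_in_count (T : eqType) (p q : pred T) s :
  {in s, forall v, p v -> q v} -> count p s <= count q s.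
Proof.
move=> pq; rewrite -(eq_in_count (a1 := fun v => (v \in s) && p v)) => [|v vs].
  by apply: sub_count => v /andP[vs /pq]; apply.
by rewrite /= vs.
Qed.

Lemma count_and_split (T : Type) (p q : pred T) s :
  count (fun v => p v && q v) s + count (fun v => p v && ~~ q v) s = count p s.
Proof. by elim: s => //= a s <-; case: (p a); case: (q a) => /=; lia. Qed.

Lemma sumn_map_leq (T : eqType) (f : T -> nat) s M :
  {in s, forall v, f v <= M} -> sumn (map f s) <= size s * M.
Proof.
elim: s => //= a s IH le_fM; rewrite mulSn leq_add ?le_fM ?mem_head //.
by apply: IH => v vs; apply: le_fM; rewrite inE vs orbT.
Qed.

Section Tournaments.
Variable T : eqType.
Implicit Types (beats : rel T) (s : seq T) (a u v y : T).

Definition antisym_on beats s :=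
  {in s &, forall u v, u != v -> beats u v = ~~ beats v u}.

Lemma antisym_on_sub beats s s' :
  {subset s' <= s} -> antisym_on beats s -> antisym_on beats s'.
Proof. by move=> sub an u v /sub us /sub vs; apply: an. Qed.

Definition wins beats s u := count (fun v => (v != u) && beats u v) s.

Lemma sum_wins beats s : uniq s -> antisym_on beats s ->
  2 * sumn (map (wins beats s) s) = size s * (size s).-1.
Proof.
elim: s => [|a s IH] // /andP[aNs us] an.
change (2 * (wins beats (a :: s) a + sumn (map (wins beats (a :: s)) s)) =
        (size s).+1 * size s).
have an_s : antisym_on beats s by apply: antisym_on_sub an => v vs; rewrite inE vs orbT.
have neq_a v : v \in s -> v != a by apply: contraTneq => ->.
have -> : map (wins beats (a :: s)) s = map (fun u => beats u a + wins beats s u) s.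
  by apply/eq_in_map => u uS; rewrite /wins /= eq_sym (neq_a _ uS).
have wins_a : wins beats (a :: s) a = count (beats a) s.
  by rewrite /wins /= eqxx; apply: eq_in_count => v /neq_a ->.
have lost_a : count (beats^~ a) s = count (predC (beats a)) s.
  apply: eq_in_count => v vs /=.
  by apply: an; rewrite ?inE ?vs ?eqxx ?orbT ?neq_a.
rewrite wins_a sumn_map_add sumn_count lost_a.
have := count_predC (beats a) s; have := IH us an_s.
move: (size s) (count _ s) (count _ s) (sumn _) => m c1 c2 S; nia.
Qed.

Fixpoint argmax (f : T -> nat) a s : T :=
  if s is y :: s' then
    let b := argmax f a s' in if f b <= f y then y else b
  else a.

Lemma argmax_mem f a s : argmax f a s \in a :: s.
Proof.
elim: s => [|y s IH] /=; first exact: mem_head.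
case: ifP => _; first by rewrite !inE eqxx orbT.
by move: IH; rewrite !inE => /orP[] ->; rewrite ?orbT.
Qed.

Lemma leq_argmax f a s v : v \in a :: s -> f v <= f (argmax f a s).
Proof.
elim: s v => [|y s IH] v /=; first by rewrite inE => /eqP ->.
have IHs w : w \in a :: s -> f w <= f (argmax f a s) by apply: IH.
rewrite !inE; case: ifP => le_by.
  case/or3P => [/eqP ->|/eqP -> //|vs]; apply: leq_trans le_by; apply: IHs.
    exact: mem_head.
  by rewrite inE vs orbT.
case/or3P => [/eqP ->|/eqP ->|vs]; first exact/IHs/mem_head.
  by move/negbT: le_by; rewrite -ltnNge => /ltnW.
by apply: IHs; rewrite inE vs orbT.
Qed.

Definition champion beats a s := argmax (wins beats (a :: s)) a s.

Lemma size_le_wins_champion beats a s : uniq (a :: s) -> antisym_on beats (a :: s) ->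
  size s <= 2 * wins beats (a :: s) (champion beats a s).
Proof.
move=> us an; have := sum_wins us an.
have : sumn (map (wins beats (a :: s)) (a :: s)) <=
       size (a :: s) * wins beats (a :: s) (champion beats a s).
  by apply: sumn_map_leq => v /leq_argmax.
move: (sumn _) (wins _ _ _) => S w /=; nia.
Qed.

(* Otherwise [y] beats the champion and everyone the champion beats, so it has
   more wins. *)
Lemma champion_king beats a s y : uniq (a :: s) -> antisym_on beats (a :: s) ->
  y \in a :: s -> y != champion beats a s ->
  beats (champion beats a s) y \/
  exists2 z, z \in a :: s & beats (champion beats a s) z && beats z y.
Proof.
set c := champion beats a s => us an ys yNc.
case cy: (beats c y); [by left | right].
have [/hasP[z zs /andP[cz zy]]|/hasPn no_path] :=
  boolP (has (fun z => beats c z && beats z y) (a :: s)).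
  by exists z; rewrite // cz.
exfalso.
have cs : c \in a :: s := argmax_mem _ _ _.
have yc : beats y c by rewrite (an y c) // cy.
pose beaten v := (v != c) && beats c v.
have beaten_by_y : count (predU beaten (pred1 c)) (a :: s) <= wins beats (a :: s) y.
  apply: sub_in_count => v vs /orP[/andP[vNc cv]|/eqP ->]; last by rewrite eq_sym yNc.
  have vNy : v != y by apply: contraTneq cv => ->; rewrite cy.
  have yNv : y != v by rewrite eq_sym.
  have := no_path v vs; rewrite cv /= => vyN.
  by rewrite vNy (an y v ys vs yNv).
have disj : count (predI beaten (pred1 c)) (a :: s) = 0.
  apply/eqP; rewrite eqn0Ngt -has_count; apply/hasPn => v _ /=.
  by rewrite /beaten; case: (v =P c) => [->|]; rewrite ?eqxx ?andbF.
have := count_predUI beaten (pred1 c) (a :: s).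
rewrite disj (count_uniq_mem _ us) cs addn0 => count_U.
have := leq_argmax (wins beats (a :: s)) ys.
rewrite -/c /wins -/beaten in beaten_by_y *; lia.
Qed.

Definition undominated beats u s := [seq v <- s | (v != u) && ~~ beats u v].
Arguments undominated : simpl never.

Lemma size_undominated_lt beats u s : u \in s -> size (undominated beats u s) < size s.
Proof.
move=> us; rewrite /undominated size_filter -(count_predC (fun v => (v != u) && ~~ beats u v) s).
rewrite -addn1 leq_add2l -has_count; apply/hasP; exists u => //=.
by rewrite eqxx.
Qed.

Lemma size_undominated_champion beats a s : uniq (a :: s) -> antisym_on beats (a :: s) ->
  2 * size (undominated beats (champion beats a s) (a :: s)) <= size s.
Proof.
set c := champion beats a s => us an.
have cs : c \in a :: s := argmax_mem _ _ _.
have := size_le_wins_champion us an.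
have := count_and_split (predC (pred1 c)) (beats c) (a :: s).
have := count_predC (pred1 c) (a :: s); rewrite (count_uniq_mem _ us) cs.
rewrite /undominated size_filter -/c /wins.
under [count (fun v => (v != c) && beats c v) _]eq_count do rewrite eq_sym.
move: (count _ _) (count _ _) (count _ _) => n1 n2 n3 /=; lia.
Qed.

(* Complete as soon as [size s <= fuel]: each round removes its champion. *)
Fixpoint greedy_dominators beats fuel s : seq T :=
  if fuel is f.+1 then
    if s is a :: s' then
      let c := champion beats a s' in c :: greedy_dominators beats f (undominated beats c s)
    else [::]
  else [::].

Lemma greedy_dominators_sub beats fuel s : {subset greedy_dominators beats fuel s <= s}.
Proof.
elim: fuel s => [|f IH] [|a s] //= v; rewrite inE => /orP[/eqP ->|/IH].
  exact: argmax_mem.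
by rewrite /undominated mem_filter => /andP[].
Qed.

Lemma greedy_dominators_cover beats fuel s : size s <= fuel ->
  {in s, forall y, exists2 z, z \in greedy_dominators beats fuel s & (z == y) || beats z y}.
Proof.
elim: fuel s => [|f IH] [|a s] //= le_s_f y ys.
set c := champion beats a s.
case cy: ((c == y) || beats c y); first by exists c; rewrite ?mem_head.
have lt_U := size_undominated_lt beats (argmax_mem (wins beats (a :: s)) a s).
have U_small : size (undominated beats c (a :: s)) <= f by rewrite -ltnS (leq_trans lt_U).
have yU : y \in undominated beats c (a :: s).
  by rewrite /undominated mem_filter ys andbT -negb_or eq_sym cy.
have [z zD zy] := IH _ U_small y yU.
by exists z; rewrite // inE zD orbT.
Qed.

Lemma greedy_dominators_size beats fuel s : uniq s -> antisym_on beats s ->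
  2 ^ size (greedy_dominators beats fuel s) <= (2 * size s).+1.
Proof.
elim: fuel s => [|f IH] [|a s] // us an /=.
set c := champion beats a s; set U := undominated beats c (a :: s).
have uU : uniq U by apply: filter_uniq.
have anU : antisym_on beats U by apply: antisym_on_sub an => v; rewrite /undominated mem_filter => /andP[].
have := IH U uU anU; have := size_undominated_champion us an.
rewrite expnS -/c -/U; move: (size U) (2 ^ _) => u P; lia.
Qed.

End Tournaments.

Lemma leq_exp2_succ a m : 0 < m -> 2 ^ a <= (2 ^ m).+1 -> a <= m.
Proof.
move=> m_gt0 le_a; rewrite leqNgt; apply/negP => lt_m_a.
have : 2 ^ m.+1 <= 2 ^ a by rewrite leq_exp2l.
have : 2 <= 2 ^ m by rewrite -{1}(expn1 2) leq_exp2l.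
rewrite expnS; lia.
Qed.

Section Chunks.
Variable T : Type.

Fixpoint chunks (g fuel : nat) (s : seq T) : seq (seq T) :=
  if fuel is f.+1 then
    if size s <= g then [:: s] else take g s :: chunks g f (drop g s)
  else [:: s].

Lemma flatten_chunks g f s : flatten (chunks g f s) = s.
Proof.
elim: f s => [|f IH] s /=; first by rewrite cats0.
by case: ifP => _ /=; rewrite ?cats0 // IH cat_take_drop.
Qed.

Lemma chunks_spec g f s : 0 < g -> size s <= f ->
  all (fun G => size G <= g) (chunks g f s) /\ g * (size (chunks g f s)).-1 <= size s.
Proof.
move=> g_gt0; elim: f s => [|f IH] s /=.
  by rewrite leqn0 => /eqP ->; rewrite muln0 andbT.
move=> le_s; case: ifP => [le_g|/negbT]; first by rewrite /= le_g muln0.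
rewrite -ltnNge => lt_g.
have [small few] : all (fun G => size G <= g) (chunks g f (drop g s)) /\
                   g * (size (chunks g f (drop g s))).-1 <= size (drop g s).
  by apply: IH; rewrite size_drop; lia.
rewrite /= size_take lt_g leqnn small; split=> //.
move: few; rewrite size_drop.
by case: (chunks g f (drop g s)) => [|G Gs] /=; rewrite ?muln0 ?mulnS; lia.
Qed.

End Chunks.

(* [Ask i j k] continues with [k true] on the answer "x_i >= x_j" and with
   [k false] on the answer "x_j >= x_i". *)
Inductive prog (n : nat) (A : Type) : Type :=
| Ret : A -> prog n A
| Ask : 'I_n -> 'I_n -> (bool -> prog n A) -> prog n A.
Arguments Ret {n A}.
Arguments Ask {n A}.

Section Programs.
Variable n : nat.
Implicit Types (i j u v : 'I_n) (beats : rel 'I_n) (s js : seq 'I_n) (b : bool).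

Fixpoint bind A B (p : prog n A) (f : A -> prog n B) : prog n B :=
  match p with Ret a => f a | Ask i j k => Ask i j (fun b => bind (k b) f) end.

Fixpoint tree_of_prog (p : prog n 'I_n) : ctree n :=
  match p with
  | Ret a => Leaf a
  | Ask i j k => Cmp i j (tree_of_prog (k true)) (tree_of_prog (k false))
  end.

Variable x : 'I_n -> R.

(* [Q a c] must hold for every admissible run of [p] returning [a] after [c]
   comparisons. *)
Fixpoint wp A (p : prog n A) (Q : A -> nat -> Prop) : Prop :=
  match p with
  | Ret a => Q a 0
  | Ask i j k =>
    (admissible_ge (x i) (x j) -> wp (k true) (fun a c => Q a c.+1)) /\
    (admissible_ge (x j) (x i) -> wp (k false) (fun a c => Q a c.+1))
  end.

Lemma wp_mono A (p : prog n A) (Q Q' : A -> nat -> Prop) :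
  (forall a c, Q a c -> Q' a c) -> wp p Q -> wp p Q'.
Proof.
elim: p Q Q' => [a|i j k IH] Q Q' QQ' /=; first exact: QQ'.
by case=> wp_t wp_f; split=> adm; [apply: IH (wp_t adm) | apply: IH (wp_f adm)] => a c; apply: QQ'.
Qed.

Lemma wp_bind A B (p : prog n A) (f : A -> prog n B) Q :
  wp p (fun a c1 => wp (f a) (fun r c2 => Q r (c1 + c2))) -> wp (bind p f) Q.
Proof.
elim: p Q => [a|i j k IH] Q /=; first by apply: wp_mono => r c; rewrite add0n.
by case=> wp_t wp_f; split=> adm; apply: IH;
  [apply: wp_mono (wp_t adm) | apply: wp_mono (wp_f adm)] => a c1;
  apply: wp_mono => r c2; rewrite addSn.
Qed.

Lemma wp_run (p : prog n 'I_n) Q a c : wp p Q -> run x (tree_of_prog p) a c -> Q a c.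
Proof.
elim: p Q a c => [b|i j k IH] Q a c /= wp_p run_p.
  by inversion run_p; subst.
inversion run_p as [|? ? ? ? ? ? adm run_k|? ? ? ? ? ? adm run_k]; subst.
  exact: IH (wp_p.1 adm) run_k.
exact: IH (wp_p.2 adm) run_k.
Qed.

Definition approx_ge u v := (x v - 1 <= x u)%R.

Lemma approx_ge_refl u : approx_ge u u.
Proof. rewrite /approx_ge; lra. Qed.

Lemma admissible_approx_ge u v : admissible_ge (x u) (x v) -> approx_ge u v.
Proof.
rewrite /approx_ge /admissible_ge => -[|]; last lra.
by rewrite Rabs_minus_sym => /(Rle_trans _ _ _ (Rle_abs _)); lra.
Qed.

(* Answers are stored as a tournament: [beats u v] records the answer "x_u >= x_v". *)
Definition record (beats : rel 'I_n) i j (b : bool) : rel 'I_n := fun u v =>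
  if (u == i) && (v == j) then b
  else if (u == j) && (v == i) then ~~ b else beats u v.

Definition valid_pair (beats : rel 'I_n) u v :=
  [/\ beats u v = ~~ beats v u, beats u v -> approx_ge u v & beats v u -> approx_ge v u].

Lemma valid_pair_sym beats u v : valid_pair beats u v -> valid_pair beats v u.
Proof. by case=> e uv vu; split=> //; rewrite e negbK. Qed.

Definition valid_on beats (s : seq 'I_n) :=
  {in s &, forall u v, u != v -> valid_pair beats u v}.

Lemma valid_on_antisym beats s : valid_on beats s -> antisym_on beats s.
Proof. by move=> val u v us vs /(val u v us vs) []. Qed.

Lemma valid_on_approx_ge beats s : valid_on beats s ->
  {in s &, forall u v, (u == v) || beats u v -> approx_ge u v}.
Proof.
move=> val u v us vs; case: (eqVneq u v) => [-> _|uv /= buv]; first exact: approx_ge_refl.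
by case: (val u v us vs uv) => _ /(_ buv).
Qed.

Fixpoint play_row i (js : seq 'I_n) beats : prog n (rel 'I_n) :=
  if js is j :: js' then Ask i j (fun b => play_row i js' (record beats i j b))
  else Ret beats.

Fixpoint round_robin (s : seq 'I_n) beats : prog n (rel 'I_n) :=
  if s is i :: s' then bind (play_row i s' beats) (round_robin s') else Ret beats.

Definition touches i (js : seq 'I_n) u v :=
  ((u == i) && (v \in js)) || ((v == i) && (u \in js)).

Lemma record_valid beats i j b : i != j ->
  (b -> approx_ge i j) -> (~~ b -> approx_ge j i) -> valid_pair (record beats i j b) i j.
Proof.
move=> ij bij bji; have ji : (j == i) = false by rewrite eq_sym (negbTE ij).
by rewrite /valid_pair /record !eqxx ji (negbTE ij) /=; split; rewrite ?negbK.
Qed.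

Lemma play_row_spec i js beats : i \notin js ->
  wp (play_row i js beats) (fun beats' c => [/\ c = size js,
     forall u v, ~~ touches i js u v -> beats' u v = beats u v &
     forall j, j \in js -> valid_pair beats' i j]).
Proof.
elim: js beats => [|j js IH] beats /=; first by split=> // u v.
rewrite inE negb_or => /andP[ij ijs].
suff step b : (b -> approx_ge i j) -> (~~ b -> approx_ge j i) ->
  wp (play_row i js (record beats i j b)) (fun beats' c => [/\ c.+1 = (size js).+1,
     forall u v, ~~ touches i (j :: js) u v -> beats' u v = beats u v &
     forall j', j' \in j :: js -> valid_pair beats' i j']).
  by split=> adm; apply: step => // _; apply: admissible_approx_ge.
move=> bij bji; apply: wp_mono (IH _ ijs) => beats' c [-> keep valid]; split=> //.
  move=> u v; rewrite /touches !inE => untouched; rewrite keep; last first.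
    by apply: contra untouched => /orP[] /andP[-> ->]; rewrite ?orbT.
  rewrite /record; case: ifP => [/andP[/eqP eu /eqP ev]|_].
    by move: untouched; rewrite eu ev !eqxx.
  case: ifP => // /andP[/eqP eu /eqP ev].
  by move: untouched; rewrite eu ev !eqxx ?orbT.
move=> j'; rewrite inE => /orP[/eqP ->|]; last exact: valid.
case jjs: (j \in js); first exact: valid.
have untouched w w' : (w == i) && (w' == j) || (w == j) && (w' == i) -> ~~ touches i js w w'.
  case/orP=> /andP[/eqP -> /eqP ->]; rewrite /touches jjs eq_sym (negbTE ij) /=;
  by rewrite ?andbF ?orbF.
have [e1 e2 e3] := record_valid beats ij bij bji.
by split; rewrite ?keep ?untouched ?eqxx ?orbT.
Qed.

Lemma round_robin_spec s beats : uniq s ->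
  wp (round_robin s beats) (fun beats' c => [/\ c <= size s * size s,
     forall u v, (u \notin s) || (v \notin s) -> beats' u v = beats u v &
     valid_on beats' s]).
Proof.
elim: s beats => [|i s IH] beats /=; first by split=> // u v; rewrite in_nil.
case/andP=> iNs us; apply: wp_bind.
apply: wp_mono (play_row_spec beats iNs) => b1 c1 [-> keep1 valid1].
apply: wp_mono (IH b1 us) => b2 c2 [le_c2 keep2 valid2].
have same_i w : b2 i w = b1 i w /\ b2 w i = b1 w i by rewrite !keep2 // iNs ?orbT.
split.
- by move: (size s) le_c2 => m le_c2; rewrite mulSn mulnS; lia.
- move=> u v; rewrite !inE !negb_or => out; rewrite keep2; last first.
    by case/orP: out => /andP[_ ->]; rewrite ?orbT.
  apply: keep1; rewrite /touches.
  by case/orP: out => /andP[/negbTE -> /negbTE ->]; rewrite ?andbF.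
- move=> u v; rewrite !inE => /orP[/eqP ->|us'] /orP[/eqP ->|vs'] uv.
  + by rewrite eqxx in uv.
  + by rewrite /valid_pair; case: (same_i v) => -> ->; apply: valid1.
  + by apply: valid_pair_sym; rewrite /valid_pair; case: (same_i u) => -> ->; apply: valid1.
  + exact: valid2.
Qed.

Definition no_answers : rel 'I_n := fun _ _ => false.

Definition reduce_group (G : seq 'I_n) : prog n (seq 'I_n) :=
  let s := undup G in
  bind (round_robin s no_answers) (fun beats => Ret (greedy_dominators beats (size s) s)).

Lemma reduce_group_spec G :
  wp (reduce_group G) (fun D c => [/\ c <= size G * size G, 2 ^ size D <= (2 * size G).+1 &
     {in G, forall y, exists2 z, z \in D & approx_ge z y}]).
Proof.
apply: wp_bind; apply: wp_mono (round_robin_spec no_answers (undup_uniq G)).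
move=> beats c [le_c _ valid] /=; have le_size := size_undup G; split.
- by rewrite addn0 (leq_trans le_c) // leq_mul.
- apply: leq_trans (greedy_dominators_size _ (undup_uniq G) (valid_on_antisym valid)) _.
  by rewrite ltnS leq_mul2l le_size orbT.
- move=> y; rewrite -mem_undup => yG.
  have [z zD zy] := greedy_dominators_cover beats (leqnn _) yG.
  exists z => //; apply: valid_on_approx_ge valid _ _ _ yG zy.
  exact: greedy_dominators_sub zD.
Qed.

Fixpoint reduce_groups (Gs : seq (seq 'I_n)) : prog n (seq 'I_n) :=
  if Gs is G :: Gs' then
    bind (reduce_group G) (fun D => bind (reduce_groups Gs') (fun D' => Ret (D ++ D')))
  else Ret [::].

Lemma reduce_groups_spec h Gs : all (fun G => size G <= 2 ^ h) Gs ->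
  wp (reduce_groups Gs) (fun S c => [/\ c <= 2 ^ h * size (flatten Gs),
     size S <= h.+1 * size Gs &
     {in flatten Gs, forall y, exists2 z, z \in S & approx_ge z y}]).
Proof.
elim: Gs => [|G Gs IH] /=; first by split=> // y.
case/andP=> le_G le_Gs; apply: wp_bind.
apply: wp_mono (reduce_group_spec G) => D c1 [le_c1 size_D cover_D].
apply: wp_bind; apply: wp_mono (IH le_Gs) => S c2 [le_c2 size_S cover_S]; split.
- rewrite size_cat mulnDr addn0; apply: leq_add => //.
  by rewrite (leq_trans le_c1) // leq_mul2r le_G orbT.
- rewrite size_cat mulnS; apply: leq_add => //; apply: leq_exp2_succ => //.
  by apply: leq_trans size_D _; rewrite ltnS expnS leq_mul2l le_G orbT.
- move=> y; rewrite mem_cat => /orP[/cover_D|/cover_S] [z zS zy];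
  by exists z; rewrite // mem_cat zS ?orbT.
Qed.

Definition stage h S : prog n (seq 'I_n) := reduce_groups (chunks (2 ^ h) (size S) S).

Lemma stage_spec h S :
  wp (stage h S) (fun S' c => [/\ c <= 2 ^ h * size S,
     size S' * 2 ^ h <= h.+1 * (size S + 2 ^ h) &
     {in S, forall y, exists2 z, z \in S' & approx_ge z y}]).
Proof.
have g_gt0 : 0 < 2 ^ h by rewrite expn_gt0.
have [small_chunks few_chunks] := chunks_spec g_gt0 (leqnn (size S)).
apply: wp_mono (reduce_groups_spec small_chunks) => S' c.
rewrite flatten_chunks => -[le_c size_S' cover]; split=> //.
move: size_S' few_chunks; case: (size (chunks _ _ S)) => [|q];
  move: (size S') (size S) (2 ^ h) g_gt0 => s' m g g_gt0 /=; nia.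
Qed.

Definition king (d : 'I_n) S : prog n 'I_n :=
  if undup S is a :: s then
    bind (round_robin (a :: s) no_answers) (fun beats => Ret (champion beats a s))
  else Ret d.

Lemma king_spec d S :
  wp (king d S) (fun w c => c <= size S * size S /\ {in S, forall y, (x y - 2 <= x w)%R}).
Proof.
rewrite /king; have le_size := size_undup S; have us := undup_uniq S.
case e: (undup S) => [|a s] /=; first by split=> // y; rewrite -mem_undup e.
rewrite e in us le_size; apply: wp_bind.
apply: wp_mono (round_robin_spec no_answers us) => beats c [le_c _ valid] /=.
split; first by rewrite addn0 (leq_trans le_c) // leq_mul.
move=> y; rewrite -mem_undup e => ys.
have approx := valid_on_approx_ge valid; set w := champion beats a s.
have ws : w \in a :: s := argmax_mem _ _ _.
case: (eqVneq y w) => [->|yNw]; first lra.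
case: (champion_king us (valid_on_antisym valid) ys yNw) => [wy|[z zs /andP[wz zy]]].
  by have := approx _ _ ws ys; rewrite wy orbT /approx_ge => /(_ isT); lra.
have := approx _ _ ws zs; have := approx _ _ zs ys.
by rewrite wz zy !orbT /approx_ge => /(_ isT) ? /(_ isT); lra.
Qed.

End Programs.

(* Stage [t] plays round robins in groups of size [2 ^ group_log t], which
   divides the number of survivors by about [2 ^ (group_log t - (t + 6))];
   [shrink_log t] is the accumulated exponent before stage [t]
   ([shrink_log_step]), and the additive [2 ^ (t + 6 + shrink_log t)] absorbs
   the incomplete groups. *)
Definition group_log t := 16 * 2 ^ t + t + 8.
Definition shrink_log t := 16 * 2 ^ t + 2 * t - 16.

Definition few_survivors n t l := l * 2 ^ shrink_log t <= n + 2 ^ (t + 6 + shrink_log t).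

Definition stage_const := 2 ^ 24 + 1.
Definition king_const := 2 ^ 33 + 2.

Lemma shrink_log_step t : shrink_log t + group_log t = shrink_log t.+1 + (t + 6).
Proof. by rewrite /shrink_log /group_log expnS; have := expn_gt0 2 t; lia. Qed.

Lemma shrink_log_le t : shrink_log t <= shrink_log t.+1.
Proof. by rewrite /shrink_log expnS; have := expn_gt0 2 t; lia. Qed.

Lemma group_log_lt t : (group_log t).+1 <= 2 ^ (t + 6).
Proof. by rewrite /group_log expnD; have := ltn_expl t (erefl (1 < 2)); lia. Qed.

Lemma few_survivors_step n t l l' : few_survivors n t l ->
  l' * 2 ^ group_log t <= (group_log t).+1 * (l + 2 ^ group_log t) ->
  few_survivors n t.+1 l'.
Proof.
rewrite /few_survivors => le_l le_l'.
have e_exp : 2 ^ group_log t * 2 ^ shrink_log t = 2 ^ shrink_log t.+1 * 2 ^ (t + 6).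
  by rewrite -!expnD addnC shrink_log_step.
have le_A : 2 ^ shrink_log t <= 2 ^ shrink_log t.+1 by rewrite leq_exp2l // shrink_log_le.
have lt_h := group_log_lt t.
have P_gt0 : 0 < 2 ^ (t + 6) by rewrite expn_gt0.
rewrite !addSn expnS expnD [2 ^ (t + 6 + _)]expnD in le_l *.
rewrite -(leq_pmul2r P_gt0).
move: le_l le_l' e_exp le_A lt_h P_gt0.
move: (group_log t) (2 ^ group_log t) (2 ^ shrink_log t) (2 ^ shrink_log t.+1) (2 ^ (t + 6)).
move=> h H A A' P le_l le_l' e_exp le_A lt_h P_gt0.
have le_HA : l' * H * A <= h.+1 * (l * A + H * A).
  by apply: leq_trans (leq_mul le_l' (leqnn A)) _; rewrite -mulnA mulnDl.
have le_PA : P * A <= P * A' by rewrite leq_mul2l le_A orbT.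
have : l' * A' * P <= P * (n + P * A + A' * P).
  rewrite -mulnA -e_exp mulnA (leq_trans le_HA) // leq_mul //; lia.
rewrite !mulnDr; nia.
Qed.

Lemma stage_cost_le n k t l c : t + 5 <= k -> 2 ^ (2 ^ k) <= n -> few_survivors n t l ->
  c <= 2 ^ group_log t * l -> c * 2 ^ t <= stage_const * n.
Proof.
rewrite /stage_const /few_survivors => le_tk le_n le_l le_c.
have e_exp : 2 ^ group_log t * 2 ^ t = 2 ^ 24 * 2 ^ shrink_log t.
  rewrite -!expnD; congr (2 ^ _); rewrite /group_log /shrink_log; have := expn_gt0 2 t; lia.
have le_slack : 2 ^ 24 * 2 ^ (t + 6 + shrink_log t) <= n.
  apply: leq_trans le_n; rewrite -expnD leq_exp2l //.
  have : 2 ^ (t + 5) <= 2 ^ k by rewrite leq_exp2l.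
  rewrite expnD /shrink_log; have := ltn_expl t (erefl (1 < 2)); have := expn_gt0 2 t; lia.
have : c * 2 ^ t <= 2 ^ 24 * (l * 2 ^ shrink_log t).
  by rewrite (leq_trans (leq_mul le_c (leqnn _))) // mulnAC e_exp -mulnA [l * _]mulnC.
move: le_l le_slack; move: (2 ^ 24) (l * 2 ^ shrink_log t) (2 ^ (t + 6 + _)) => E L F.
by move=> le_L le_F /leq_trans; apply; have := leq_mul (leqnn E) le_L; rewrite mulnDr; lia.
Qed.

Lemma exp2_ge_linear k : 4 <= k -> 8 * (k - 2) <= 2 ^ k.
Proof.
elim: k => // k IH; rewrite leq_eqVlt => /orP[/eqP <- //|lt_k].
by have := IH lt_k; rewrite expnS; lia.
Qed.

Lemma king_survivors_le n k l : 8 <= k -> few_survivors n (k - 4) l ->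
  l * 2 ^ (2 ^ k) <= 2 ^ 16 * n + 2 ^ (k + 2) * 2 ^ (2 ^ k).
Proof.
rewrite /few_survivors => le_8k le_l; set t := k - 4 in le_l.
have e_k : 16 * 2 ^ t = 2 ^ k by rewrite /t -(expnD 2 4); congr (2 ^ _); lia.
have e_exp : 2 ^ shrink_log t * 2 ^ 16 = 2 ^ (2 ^ k) * 2 ^ (2 * t).
  rewrite -!expnD; congr (2 ^ _); rewrite /shrink_log e_k.
  have : 2 ^ 4 <= 2 ^ k by rewrite leq_exp2l //; lia.
  lia.
have e_t : t + 6 = k + 2 by rewrite /t; lia.
have V_gt0 : 0 < 2 ^ (2 * t) by rewrite expn_gt0.
rewrite expnD e_t in le_l; move: le_l e_exp V_gt0.
move: (2 ^ shrink_log t) (2 ^ (2 * t)) (2 ^ 16) (2 ^ (2 ^ k)) (2 ^ (k + 2)) => A V Z W G.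
move=> le_l e_exp V_gt0; rewrite -(leq_pmul2r V_gt0) -mulnA -e_exp mulnA.
apply: leq_trans (leq_mul le_l (leqnn Z)) _.
rewrite mulnDl -mulnA e_exp mulnDl mulnA leq_add2r mulnC; exact: leq_pmulr.
Qed.

Lemma king_cost_le n k l : 8 <= k -> 2 ^ (2 ^ k) <= n -> n < 2 ^ (2 * 2 ^ k) ->
  few_survivors n (k - 4) l -> l * l <= king_const * n.
Proof.
rewrite /king_const => le_8k le_n lt_n le_l.
have le_lW := king_survivors_le le_8k le_l.
have le_G : 2 ^ (k + 2) * 2 ^ (k + 2) <= n.
  apply: leq_trans le_n; rewrite -expnD leq_exp2l //.
  by have := exp2_ge_linear (leq_trans (isT : 4 <= 8) le_8k); lia.
have W_gt0 : 0 < 2 ^ (2 ^ k) by rewrite expn_gt0.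
rewrite mul2n -addnn expnD in lt_n.
have e_33 : 2 ^ 33 = 2 * (2 ^ 16 * 2 ^ 16) by rewrite -expnD -expnS.
rewrite e_33; move: le_lW le_G lt_n W_gt0.
move: (2 ^ 16) (2 ^ (k + 2)) (2 ^ (2 ^ k)) => Z G W le_lW le_G lt_n W_gt0.
have sq_le : (l * W) * (l * W) <= 2 * ((Z * n) * (Z * n)) + 2 * ((G * W) * (G * W)).
  apply: leq_trans (leq_mul le_lW le_lW) _.
  move: (Z * n) (G * W) => a b.
  have le_ab : 2 * (a * b) <= a * a + b * b := (nat_Cauchy a b).1.
  nia.
have le_nn : n * n <= n * (W * W) by rewrite leq_mul2l ltnW ?orbT.
have WW_gt0 : 0 < W * W by rewrite muln_gt0 W_gt0.
rewrite -(leq_pmul2r WW_gt0); nia.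
Qed.

Section Stages.
Variables (n : nat) (x : 'I_n -> R) (d : 'I_n).

Fixpoint stages (m t : nat) (S : seq 'I_n) : prog n 'I_n :=
  if m is m'.+1 then bind (stage (group_log t) S) (stages m' t.+1) else king d S.

Lemma stages_spec k m t S : 8 <= k -> 2 ^ (2 ^ k) <= n -> n < 2 ^ (2 * 2 ^ k) ->
  t + m = k - 4 -> few_survivors n t (size S) ->
  wp x (stages m t S) (fun w c => {in S, forall y, (x y - (INR m + 2) <= x w)%R} /\
     c * 2 ^ t <= 2 * (stage_const * n) + king_const * n * 2 ^ t).
Proof.
move=> le_8k le_n lt_n; elim: m t S => [|m IH] t S e_tm few_S.
  apply: wp_mono (king_spec x d S) => w c [le_c err]; split.
    by move=> y /err; rewrite [INR 0]/=; lra.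
  rewrite addn0 in e_tm; rewrite e_tm in few_S.
  have := leq_mul (leq_trans le_c (king_cost_le le_8k le_n lt_n few_S)) (leqnn (2 ^ t)).
  by move: (2 ^ t) => P; lia.
apply: wp_bind; apply: wp_mono (stage_spec x (group_log t) S) => S' c1 [le_c1 size_S' cover].
have few_S' := few_survivors_step few_S size_S'.
have e_tm' : t.+1 + m = k - 4 by rewrite addSn -addnS.
apply: wp_mono (IH t.+1 S' e_tm' few_S') => w c2 [err le_c2]; split.
  move=> y /cover [z zS' zy]; have := err z zS'.
  by rewrite /approx_ge in zy; rewrite S_INR; lra.
have le_tk : t + 5 <= k by move: e_tm le_8k; lia.
have := stage_cost_le le_tk le_n few_S le_c1.
by move: le_c2; rewrite expnS; move: (2 ^ t) => P; nia.
Qed.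

End Stages.

Lemma INR_expn m k : INR (m ^ k) = (INR m ^ k)%R.
Proof. by elim: k => [|k IH] //=; rewrite expnS -multE mult_INR IH. Qed.

Lemma le_log2 m (y : R) : (2 ^ m <= y)%R -> (INR m <= log2 y)%R.
Proof.
move=> le_y; have pow_gt0 : (0 < 2 ^ m)%R by apply: pow_lt; lra.
have ln2_gt0 : (0 < ln 2)%R by have := ln_lt_2; lra.
have : (ln (2 ^ m) <= ln y)%R.
  case: (Rle_lt_or_eq_dec _ _ le_y) => [lt_y|<-]; last exact: Rle_refl.
  exact/Rlt_le/ln_increasing.
rewrite ln_pow; last lra.
move=> le_ln; apply: (Rmult_le_reg_r (ln 2)) => //.
by rewrite /log2 /Rdiv Rmult_assoc Rinv_l ?Rmult_1_r //; lra.
Qed.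

Lemma le_log2_log2 n k : 2 ^ (2 ^ k) <= n -> (INR k <= log2 (log2 (INR n)))%R.
Proof.
move=> le_n; apply: le_log2; rewrite -[2%R]/(INR 2) -INR_expn.
by apply: le_log2; rewrite -[2%R]/(INR 2) -INR_expn; apply/le_INR/leP.
Qed.

Lemma doubly_exp_bracket n : 2 ^ (2 ^ 8) <= n ->
  exists2 k, 8 <= k & 2 ^ (2 ^ k) <= n < 2 ^ (2 * 2 ^ k).
Proof.
move=> le_n; have n_gt0 : 0 < n by apply: leq_trans le_n; rewrite expn_gt0.
have /andP[le_Ln lt_nL] := trunc_log_bounds (isT : 1 < 2) n_gt0.
set L := trunc_log 2 n in le_Ln lt_nL.
have le_L : 2 ^ 8 <= L by apply: trunc_log_max.
have L_gt0 : 0 < L by apply: leq_trans le_L; rewrite expn_gt0.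
have /andP[le_kL lt_Lk] := trunc_log_bounds (isT : 1 < 2) L_gt0.
exists (trunc_log 2 L); first exact: trunc_log_max.
rewrite (leq_trans _ le_Ln) ?leq_exp2l //= (leq_trans lt_nL) // leq_exp2l //.
by rewrite -[2 * _]/(2 ^ 1 * 2 ^ _) -expnD.
Qed.

Local Open Scope R_scope.

Theorem mainTheorem7 :
  exists (C : R) (N : nat), forall n : nat, leq N n ->
    exists t : ctree n, forall (x : 'I_n -> R) (k : 'I_n) (c : nat),
      run x t k c ->
      INR c <= C * INR n /\
      (forall j : 'I_n, x j - log2 (log2 (INR n)) <= x k).
Proof.
exists (INR (2 * stage_const + king_const)), (2 ^ (2 ^ 8))%nat => n le_N.
have [k le_8k /andP[le_n lt_n]] := doubly_exp_bracket le_N.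
have n_gt0 : (0 < n)%nat by apply: leq_trans le_n; rewrite expn_gt0.
pose d := Ordinal n_gt0.
exists (tree_of_prog (stages d (k - 4) 0 (enum 'I_n))) => x w c run_w.
have all_few : few_survivors n 0 (size (enum 'I_n)).
  by rewrite /few_survivors size_enum_ord [shrink_log 0]/= expn0 muln1 leq_addr.
have [err cost] := wp_run (stages_spec x d le_8k le_n lt_n (add0n _) all_few) run_w.
split.
  rewrite -mult_INR; apply/le_INR/leP; move: cost; rewrite expn0 !muln1 multE; lia.
move=> j; have := err j (mem_enum _ j); have := le_log2_log2 le_n.
have : INR (k - 4) + INR 2 <= INR k.
  by rewrite -plus_INR; apply/le_INR/leP; rewrite plusE; lia.
rewrite [INR 2]/=; lra.
Qed.
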